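(* Let $\mathbb{F}$ be an algebraically closed field of characteristic $2$. Let $(V,[\cdot,\cdot]_{V},\alpha_{V},B_{V})$ be an involutive quadratic Hom-Lie algebra over $\mathbb{F}$, let $\mathscr{D}\in\mathrm{Der}_{\alpha_{V}}(V)$ be such that $B_{V}$ is $\mathscr{D}$-invariant, and let $L=\mathbb{F}e^{*}\oplus V\oplus\mathbb{F}e$ (a vector space with two new basis vectors $e^*,e$). (1) Suppose there exist $x_{0}\in V$ and $\lambda\in\mathbb{F}$ such that $\lambda\mathscr{D}+\mathrm{ad}_{V}(x_{0})=\mathscr{D}$, $\alpha_{V}(\mathscr{D}(x_{0}))=\mathscr{D}(x_{0})$, and $\alpha_{V}\circ\mathscr{D}^{2}+\mathscr{D}^{2}\circ\alpha_{V}=\mathrm{ad}_{V}(\mathscr{D}(x_{0}))$, where $\mathrm{ad}_V(x)=[x,\cdot]_V$. Let $\lambda_0\in\mathbb{F}$ and $\beta\in\mathbb{F}$ be arbitrary. Define the bilinear alternating bracket on $L$ by $[x,y]=[x,y]_{V}+B_{V}(\mathscr{D}(x),y)e$, $[e^{*},x]=[x,e^*]=\mathscr{D}(x)$ for $x,y\in V$, $[e^*,e^*]=0$, and $[e,z]=[z,e]=0$ for all $z\in L$; define the linear map $\alpha:L\to L$ by $\alpha(x)=\alpha_{V}(x)+B_{V}(x_{0},x)e$ for $x\in V$, $\alpha(e^{*})=\lambda e^{*}+x_{0}+\lambda_{0}e$, $\alpha(e)=\lambda e$; and define the symmetric bilinear form $B$ on $L$ by $B(x,y)=B_{V}(x,y)$,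 $B(x,e^{*})=B(x,e)=0$ for $x,y\in V$, $B(e^{*},e)=1$, $B(e,e)=0$, $B(e^*,e^* )=\beta$. Then $(L,[\cdot,\cdot],\alpha,B)$ is a multiplicative quadratic Hom-Lie algebra. (2) The map $\alpha$ is invertible if and only if $\lambda\neq0$. Moreover, $\alpha$ is an involution if and only if $\lambda^{2}=1$, $\alpha_{V}(x_{0})=\lambda x_{0}$ and $B_{V}(x_{0},x_{0})=0$.
   Context: A Hom-Lie algebra $(\mathfrak g,[\cdot,\cdot],\alpha)$ over $\mathbb{F}$ (characteristic 2) is a vector space $\mathfrak g$ with a linear map $\alpha$ and a bilinear bracket satisfying $[x,x]=0$, the Hom-Jacobi identity $[\alpha(x),[y,z]]+[\alpha(y),[z,x]]+[\alpha(z),[x,y]]=0$, and $\alpha([x,y])=[\alpha(x),\alpha(y)]$ (multiplicativity) for all $x,y,z$. It is involutive if $\alpha^2=\mathrm{id}$. A quadratic Hom-Lie algebra $(\mathfrak g,[\cdot,\cdot],\alpha,B)$ is a Hom-Lie algebra with a symmetric nondegenerate bilinear form $B$ satisfying $B([x,y],z)=B(x,[y,z])$ and $B(\alpha(x),y)=B(x,\alpha(y))$ for all $x,y,z$. An $\alpha_V$-derivation of $(V,[\cdot,\cdot]_V,\alpha_V)$ is a linear map $\mathscr{D}:V\to V$ with $\mathscr{D}\circ\alpha_V=\alpha_V\circ\mathscr{D}$ and $\mathscr{D}([x,y]_V)=[\mathscr{D}(x),\alpha_V(y)]_V+[\alpha_V(x),\mathscr{D}(y)]_V$; $\mathrm{Der}_{\alpha_V}(V)$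 is the set of these. In characteristic 2, $B_V$ is called $\mathscr{D}$-invariant if $B_V(x,\mathscr{D}(x))=0$ for all $x\in V$. *)

From mathcomp Require Import all_boot all_algebra.
Set Implicit Arguments. Unset Strict Implicit. Unset Printing Implicit Defensive.
Import GRing.Theory.
Local Open Scope ring_scope.

Section HomLie.
Variables (F : fieldType) (W : lmodType F).

Definition bilinear_map (f : W -> W -> F) : Prop :=
  (forall (a : F) x y z, f (a *: x + y) z = a * f x z + f y z) /\
  (forall (a : F) x y z, f x (a *: y + z) = a * f x y + f x z).

Definition bilinear_bracket (br : W -> W -> W) : Prop :=
  (forall (a : F) x y z, br (a *: x + y) z = a *: br x z + br y z) /\
  (forall (a : F) x y z, br x (a *: y + z) = a *: br x y + br x z).

Definition linear_map (f : W -> W) : Prop :=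
  forall (a : F) x y, f (a *: x + y) = a *: f x + f y.

Definition is_HomLie (br : W -> W -> W) (al : W -> W) : Prop :=
  [/\ bilinear_bracket br, linear_map al,
      (forall x, br x x = 0) &
      (forall x y z, br (al x) (br y z) + br (al y) (br z x) + br (al z) (br x y) = 0)].

Definition hom_multiplicative (br : W -> W -> W) (al : W -> W) : Prop :=
  forall x y, al (br x y) = br (al x) (al y).

Definition involutive_map (al : W -> W) : Prop := forall x, al (al x) = x.

Definition symmetric_form (B : W -> W -> F) : Prop := forall x y, B x y = B y x.

Definition nondegenerate (B : W -> W -> F) : Prop :=
  forall x, (forall y, B x y = 0) -> x = 0.

Definition is_quadratic_HomLie (br : W -> W -> W) (al : W -> W) (B : W -> W -> F) : Prop :=
  is_HomLie br al /\ bilinear_map B /\ symmetric_form B /\ nondegenerate B /\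
  (forall x y z, B (br x y) z = B x (br y z)) /\
  (forall x y, B (al x) y = B x (al y)).

Definition is_alpha_derivation (br : W -> W -> W) (al : W -> W) (D : W -> W) : Prop :=
  [/\ linear_map D, (forall x, D (al x) = al (D x)) &
      (forall x y, D (br x y) = br (D x) (al y) + br (al x) (D y))].

(* characteristic-2 D-invariance of B *)
Definition D_invariant (B : W -> W -> F) (D : W -> W) : Prop := forall x, B x (D x) = 0.

End HomLie.

(* The extension L = F estar (+) V (+) F e, an element (a, x, b) standing for
   a estar + x + b e. *)
Section Extension.
Variables (F : fieldType) (V : lmodType F).
Definition Lext := (F^o * V * F^o)%type.

Definition mkL (a : F) (x : V) (b : F) : Lext := (a, x, b).

Variables (brV : V -> V -> V) (alV : V -> V) (BV : V -> V -> F) (D : V -> V)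
  (x0 : V) (lam lam0 beta : F).

(* [a estar + x + b e, c estar + y + d e]
     = [x,y]_V + B_V(D x, y) e + a D(y) + c D(x)  (e central, [estar,estar] = 0) *)
Definition ext_bracket (u v : Lext) : Lext :=
  let: (a, x, b) := u in let: (c, y, d) := v in
  mkL 0 (brV x y + a *: D y + c *: D x) (BV (D x) y).

Definition ext_alpha (u : Lext) : Lext :=
  let: (a, x, b) := u in
  mkL (a * lam) (alV x + a *: x0) (a * lam0 + BV x0 x + b * lam).

Definition ext_form (u v : Lext) : F :=
  let: (a, x, b) := u in let: (c, y, d) := v in
  BV x y + a * d + b * c + beta * (a * c).

End Extension.

(** Over V, the
   hypotheses say that [x0, -] = (1 - lam) D and, since D commutes with alV, that
   D x0 is central; in characteristic 2 the D-invariance of B_V makes D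
   B_V-symmetric.  With these rules every component of the Hom-Jacobi identity and
   of multiplicativity becomes a polynomial identity modulo 2 once vectors are
   compared through the nondegenerate form B_V.  The twist al is triangular with
   diagonal (lam, alV, lam), so it is invertible exactly when lam is, and
   evaluating al twice at e^* gives the conditions for al to be an involution. *)

From mathcomp Require Import all_boot all_algebra.
From mathcomp Require Import ring.
Import GRing.Theory.
Local Open Scope ring_scope.
Set Implicit Arguments. Unset Strict Implicit.

Lemma linear_map_eqs (F : fieldType) (W X : lmodType F) (f : W -> X) :
  (forall (a : F) x y, f (a *: x + y) = a *: f x + f y) ->
  [/\ f 0 = 0, {morph f : x y / x + y} & forall a, {morph f : x / a *: x}].
Proof.
move=> f_lin; have f0 : f 0 = 0.
  have := f_lin 1 0 0; rewrite !scale1r addr0 => f0_double.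
  by apply: (addIr (f 0)); rewrite add0r -f0_double.
split=> // [x y|a x]; first by have := f_lin 1 x y; rewrite !scale1r.
by rewrite -[a *: x]addr0 f_lin f0 addr0.
Qed.

Lemma addvv_pchar2 (F : fieldType) (W : lmodType F) (v : W) :
  2 \in [pchar F] -> v + v = 0.
Proof. by move=> pchar2F; rewrite -mulr2n -scaler_nat (pcharf0 pchar2F) scale0r. Qed.

Lemma oppv_pchar2 (F : fieldType) (W : lmodType F) (v : W) :
  2 \in [pchar F] -> - v = v.
Proof. by move=> pchar2F; apply/esym/eqP; rewrite -addr_eq0 addvv_pchar2. Qed.

Lemma addv0_eq_pchar2 (F : fieldType) (W : lmodType F) (v w : W) :
  2 \in [pchar F] -> v + w = 0 -> v = w.
Proof. by move=> pchar2F /eqP; rewrite addr_eq0 oppv_pchar2 // => /eqP. Qed.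

Lemma scalerDr_ACA (F : fieldType) (W : lmodType F) (k : F) (A B A' B' : W) :
  k *: (A + B) + (A' + B') = (k *: A + A') + (k *: B + B').
Proof. by rewrite scalerDr addrACA. Qed.

Section ExtensionArithmetic.
Variables (F : fieldType) (V : lmodType F).

Lemma Lext0 : 0 = mkL 0 0 0 :> Lext V. Proof. by []. Qed.

Lemma LextD a x b c y d :
  mkL a x b + mkL c y d = mkL (a + c) (x + y) (b + d) :> Lext V.
Proof. by []. Qed.

Lemma LextZ k a x b : k *: mkL a x b = mkL (k * a) (k *: x) (k * b) :> Lext V.
Proof. by []. Qed.

End ExtensionArithmetic.

Section DoubleExtension.
Variables (F : fieldType) (V : lmodType F).
Variables (brV : V -> V -> V) (alV : V -> V) (BV : V -> V -> F) (D : V -> V).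
Hypothesis pchar2F : 2 \in [pchar F].
Hypotheses (brV_bilinear : bilinear_bracket brV) (BV_bilinear : bilinear_map BV).
Hypotheses (alV_linear : linear_map alV) (D_linear : linear_map D).

Let brV_linl z := linear_map_eqs (fun a x y => brV_bilinear.1 a x y z).
Let brV_linr z := linear_map_eqs (brV_bilinear.2 ^~ z).
Let BV_linl z := linear_map_eqs (X := F^o) (fun a x y => BV_bilinear.1 a x y z).
Let BV_linr z := linear_map_eqs (X := F^o) (BV_bilinear.2 ^~ z).

Lemma brVDl x y z : brV (x + y) z = brV x z + brV y z.
Proof. by case: (brV_linl z) => _ ->. Qed.
Lemma brVZl a x z : brV (a *: x) z = a *: brV x z.
Proof. by case: (brV_linl z) => _ _ ->. Qed.
Lemma brVDr z x y : brV z (x + y) = brV z x + brV z y.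
Proof. by case: (brV_linr z) => _ ->. Qed.
Lemma brVZr a z x : brV z (a *: x) = a *: brV z x.
Proof. by case: (brV_linr z) => _ _ ->. Qed.
Lemma BV0l z : BV 0 z = 0.
Proof. by case: (BV_linl z) => ->. Qed.
Lemma BVDl x y z : BV (x + y) z = BV x z + BV y z.
Proof. by case: (BV_linl z) => _ ->. Qed.
Lemma BVZl a x z : BV (a *: x) z = a * BV x z.
Proof. by case: (BV_linl z) => _ _ ->. Qed.
Lemma BV0r z : BV z 0 = 0.
Proof. by case: (BV_linr z) => ->. Qed.
Lemma BVDr z x y : BV z (x + y) = BV z x + BV z y.
Proof. by case: (BV_linr z) => _ ->. Qed.
Lemma BVZr a z x : BV z (a *: x) = a * BV z x.
Proof. by case: (BV_linr z) => _ _ ->. Qed.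
Lemma alV0 : alV 0 = 0.
Proof. by case: (linear_map_eqs alV_linear) => ->. Qed.
Lemma alVD x y : alV (x + y) = alV x + alV y.
Proof. by case: (linear_map_eqs alV_linear) => _ ->. Qed.
Lemma alVZ a x : alV (a *: x) = a *: alV x.
Proof. by case: (linear_map_eqs alV_linear) => _ _ ->. Qed.
Lemma DD x y : D (x + y) = D x + D y.
Proof. by case: (linear_map_eqs D_linear) => _ ->. Qed.
Lemma DZ a x : D (a *: x) = a *: D x.
Proof. by case: (linear_map_eqs D_linear) => _ _ ->. Qed.

Hypothesis brV_alt : forall x, brV x x = 0.

Lemma brVC x y : brV x y = brV y x.
Proof.
apply: addv0_eq_pchar2 => //; have := brV_alt (x + y).
by rewrite brVDl !brVDr !brV_alt add0r addr0.
Qed.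

Hypotheses (BV_sym : forall x y, BV x y = BV y x)
  (BV_nondeg : forall x, (forall y, BV x y = 0) -> x = 0).

Lemma BV_ext u v : (forall t, BV u t = BV v t) -> u = v.
Proof.
move=> eqBV; apply/subr0_eq/BV_nondeg => t.
by rewrite BVDl -scaleN1r BVZl eqBV mulN1r subrr.
Qed.

Hypothesis BV_Dinv : D_invariant BV D.

Lemma BV_D_swap x y : BV x (D y) = BV (D x) y.
Proof.
apply: (addv0_eq_pchar2 (W := F^o)) => //; have := BV_Dinv (x + y).
by rewrite /D_invariant DD !BVDl !BVDr !BV_Dinv add0r addr0 (BV_sym y).
Qed.

Lemma BV_D_self x : BV (D x) x = 0.
Proof. by rewrite BV_sym BV_Dinv. Qed.

Hypotheses (BV_invariant : forall x y z, BV (brV x y) z = BV x (brV y z))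
  (BV_alV : forall x y, BV (alV x) y = BV x (alV y)).
Hypotheses (alV_mult : hom_multiplicative brV alV) (alV_invol : involutive_map alV).
Hypothesis brV_jacobi : forall x y z,
  brV (alV x) (brV y z) + brV (alV y) (brV z x) + brV (alV z) (brV x y) = 0.

Lemma brV_jacobi_rot x y z :
  brV (alV x) (brV y z) = brV (alV y) (brV z x) + brV (alV z) (brV x y).
Proof. by apply: addv0_eq_pchar2; rewrite // addrA brV_jacobi. Qed.

Lemma BV_alV_alV x y : BV (alV x) (alV y) = BV x y.
Proof. by rewrite BV_alV alV_invol. Qed.

Hypotheses (D_alV : forall x, D (alV x) = alV (D x))
  (D_der : forall x y, D (brV x y) = brV (D x) (alV y) + brV (alV x) (D y)).

Lemma BV_alVD_brV x y z :
  BV (alV (D x)) (brV y z) = BV (alV (D y)) (brV z x) + BV (alV (D z)) (brV x y).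
Proof.
rewrite -D_alV -BV_D_swap D_der BVDr; congr (_ + _).
  by rewrite -BV_invariant -BV_alV alV_mult alV_invol BV_invariant BV_sym BV_invariant.
by rewrite -BV_invariant -alV_mult BV_alV BV_sym.
Qed.

Lemma BV_alVDD_sym y z : BV (alV (D (D z))) y = BV (alV (D (D y))) z.
Proof. by rewrite BV_alV BV_sym !BV_D_swap !D_alV. Qed.

Variables (x0 : V) (lam : F).
Hypotheses (D_x0 : forall y, lam *: D y + brV x0 y = D y) (alV_Dx0 : alV (D x0) = D x0)
  (D2_alV : forall y, alV (D (D y)) + D (D (alV y)) = brV (D x0) y).

(* In characteristic 2 this is (1 + lam) *: D y, but [ring: two0] only cancels
   coefficients equal to 2, and (1 + lam) would produce coefficients 4 below. *)
Lemma brV_x0l y : brV x0 y = (1 - lam) *: D y.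
Proof. by rewrite scalerBl scale1r -{1}(D_x0 y) [lam *: D y + _]addrC addrK. Qed.

Lemma brV_x0r y : brV y x0 = (1 - lam) *: D y.
Proof. by rewrite brVC brV_x0l. Qed.

Lemma brV_Dx0l y : brV (D x0) y = 0.
Proof. by rewrite -D2_alV !D_alV addvv_pchar2. Qed.

Lemma BV_Dx0_brV y z : BV (D x0) (brV y z) = 0.
Proof. by rewrite -BV_invariant brV_Dx0l BV0l. Qed.

Lemma BV_x0_brV x y : BV x0 (brV x y) = (1 - lam) * BV (D x) y.
Proof. by rewrite -BV_invariant brV_x0l BVZl. Qed.

Lemma BV_alVD_x0 x : BV (alV (D x)) x0 = BV (D x0) x.
Proof. by rewrite BV_sym -D_alV BV_D_swap -BV_alV alV_Dx0. Qed.

Lemma BV_Dx0_alV y : BV (D x0) (alV y) = BV (D x0) y.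
Proof. by rewrite -BV_alV alV_Dx0. Qed.

Variables (lam0 beta : F).
Local Notation br := (ext_bracket brV BV D).
Local Notation al := (ext_alpha alV BV x0 lam lam0).
Local Notation B := (ext_form BV beta).

Lemma ext_bracket_bilinear : bilinear_bracket br.
Proof.
split=> k [[a x] b] [[c y] d] [[f z] g];
  rewrite LextZ LextD /ext_bracket /= LextZ LextD; congr mkL; rewrite ?mulr0 ?addr0 //.
- rewrite !scalerDr_ACA brV_bilinear.1; congr (_ + _ + _).
    by rewrite scalerDl scalerA.
  by rewrite D_linear scalerDr !scalerA mulrC.
- by rewrite D_linear BV_bilinear.1.
- rewrite !scalerDr_ACA brV_bilinear.2; congr (_ + _ + _).
    by rewrite D_linear scalerDr !scalerA mulrC.
  by rewrite scalerDl scalerA.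
- by rewrite BV_bilinear.2.
Qed.

Lemma ext_alpha_linear : linear_map al.
Proof.
move=> k [[a x] b] [[c y] d]; rewrite LextZ LextD /ext_alpha /= LextZ LextD; congr mkL.
- by rewrite mulrDl mulrA.
- by rewrite scalerDr_ACA alV_linear scalerDl scalerA.
- by rewrite BV_bilinear.2; ring.
Qed.

Lemma ext_bracket_alt u : br u u = 0.
Proof.
case: u => [[a x] b]; rewrite /ext_bracket /= Lext0.
by rewrite brV_alt add0r addvv_pchar2 // BV_D_self.
Qed.

Lemma ext_hom_jacobi u v w :
  br (al u) (br v w) + br (al v) (br w u) + br (al w) (br u v) = 0.
Proof.
have two0 : 2%:R = 0 :> F := pcharf0 pchar2F.
move: u v w => [[a x] b] [[c y] d] [[f z] g]; rewrite /ext_bracket /ext_alpha /=.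
rewrite !LextD Lext0; congr mkL; first by rewrite !addr0.
  apply: BV_ext => t.
  rewrite !(alVD, alVZ, DD, DZ, D_der, brVDl, brVDr, brVZl, brVZr, brV_x0l, scale0r, addr0).
  rewrite !(brVC (D _) (alV _)) (brV_jacobi_rot x) !(BVDl, BVZl, BV0l).
  ring: two0.
rewrite !(DD, DZ, D_alV, BVDl, BVDr, BVZl, BVZr, BV_D_swap, BV_Dx0_brV) (BV_alVD_brV x).
rewrite (BV_alVDD_sym y z) (BV_alVDD_sym x z) (BV_alVDD_sym x y).
ring: two0.
Qed.

Lemma ext_is_HomLie : is_HomLie br al.
Proof.
split; [exact: ext_bracket_bilinear | exact: ext_alpha_linear | exact: ext_bracket_alt |].
exact: ext_hom_jacobi.
Qed.

Lemma ext_form_bilinear : bilinear_map B.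
Proof.
split=> k [[a x] b] [[c y] d] [[f z] g];
  rewrite LextZ LextD /ext_form /= ?(BVDl, BVZl, BVDr, BVZr); ring.
Qed.

Lemma ext_form_sym u v : B u v = B v u.
Proof. by case: u v => [[a x] b] [[c y] d]; rewrite /ext_form /= BV_sym; ring. Qed.

Lemma ext_form_nondeg u : (forall v, B u v = 0) -> u = 0.
Proof.
case: u => [[a x] b] Bu0.
have x_0 : x = 0.
  by apply: BV_nondeg => y; have := Bu0 (mkL 0 y 0); rewrite /ext_form /= !mulr0 !addr0.
have a0 : a = 0 by have := Bu0 (mkL 0 0 1); rewrite /ext_form /= x_0 BV0l => <-; ring.
have b0 : b = 0 by have := Bu0 (mkL 1 0 0); rewrite /ext_form /= x_0 a0 BV0l => <-; ring.
by rewrite x_0 a0 b0.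
Qed.

Lemma ext_form_invariant u v w : B (br u v) w = B u (br v w).
Proof.
case: u v w => [[a x] b] [[c y] d] [[f z] g].
by rewrite /ext_form /ext_bracket /= !(BVDl, BVDr, BVZl, BVZr) BV_invariant !BV_D_swap; ring.
Qed.

Lemma ext_form_alpha u v : B (al u) v = B u (al v).
Proof.
case: u v => [[a x] b] [[c y] d].
by rewrite /ext_form /ext_alpha /= !(BVDl, BVDr, BVZl, BVZr) BV_alV (BV_sym x x0); ring.
Qed.

Lemma ext_is_quadratic_HomLie : is_quadratic_HomLie br al B.
Proof.
split; first exact: ext_is_HomLie.
split; first exact: ext_form_bilinear.
split; first exact: ext_form_sym.
split; first exact: ext_form_nondeg.
by split; [exact: ext_form_invariant | exact: ext_form_alpha].
Qed.

Lemma ext_alpha_multiplicative : hom_multiplicative br al.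
Proof.
have two0 : 2%:R = 0 :> F := pcharf0 pchar2F.
case=> [[a x] b] [[c y] d]; rewrite /ext_bracket /ext_alpha /=; congr mkL.
- by rewrite mul0r.
- apply: BV_ext => t.
  (* [x0, x0] = 0 must be used before [x0, -] = (1 - lam) D: it carries the
     information (1 - lam) D x0 = 0. *)
  rewrite !(alVD, alVZ, DD, DZ, brVDl, brVDr, brVZl, brVZr) brV_alt.
  rewrite !(brV_x0l, brV_x0r, alV_mult, alV_invol, D_alV, alV_Dx0, scaler0, addr0).
  rewrite !(BVDl, BVZl).
  ring: two0.
- rewrite !(alVD, alVZ, DD, DZ, D_alV, BVDl, BVDr, BVZl, BVZr, BV_D_swap).
  rewrite BV_x0_brV BV_alV_alV BV_alVD_x0 BV_Dx0_alV BV_D_self.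
  ring: two0.
Qed.

Definition ext_alpha_inv (u : Lext V) : Lext V :=
  let: (p, q, r) := u in
  let a := p / lam in let x := alV (q - a *: x0) in
  mkL a x ((r - a * lam0 - BV x0 x) / lam).

Lemma ext_alpha_bijective : bijective al <-> lam != 0.
Proof.
split=> [al_bij | lam_neq0].
  apply/eqP => lam_eq0.
  have al_e : al (mkL 0 0 1) = al (mkL 0 0 0) by rewrite /ext_alpha /= lam_eq0 !mulr0.
  by case: (bij_inj al_bij al_e) => /eqP; rewrite oner_eq0.
exists ext_alpha_inv.
  case=> [[a x] b]; rewrite /ext_alpha /ext_alpha_inv /= mulfK // addrK alV_invol.
  congr mkL.
  have -> : a * lam0 + BV x0 x + b * lam - a * lam0 - BV x0 x = b * lam by ring.
  exact: mulfK.
case=> [[p q] r]; rewrite /ext_alpha /ext_alpha_inv /= divfK // alV_invol subrK.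
by congr mkL; rewrite divfK //; ring.
Qed.

Lemma ext_alpha_involutive :
  involutive_map al <-> [/\ lam ^+ 2 = 1, alV x0 = lam *: x0 & BV x0 x0 = 0].
Proof.
have two0 : 2%:R = 0 :> F := pcharf0 pchar2F.
split=> [al_invol | [lam2 alV_x0 BV_x0]].
  have := al_invol (mkL 1 0 0); rewrite /ext_alpha /= alV0 BV0r !(add0r, mul1r, scale1r).
  case=> lam2 alV_x0 BV_x0; split.
  - by rewrite expr2.
  - exact: addv0_eq_pchar2.
  - by rewrite -[RHS]BV_x0 mul0r addr0; ring: two0.
case=> [[a x] b]; rewrite /ext_alpha /=; congr mkL.
- by rewrite -mulrA -expr2 lam2 mulr1.
- by rewrite alVD alVZ alV_invol alV_x0 scalerA -addrA addvv_pchar2 // addr0.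
- rewrite BVDr BVZr -BV_alV alV_x0 BVZl BV_x0 (BV_sym x0 x).
  rewrite -[b in RHS]mulr1 -lam2; ring: two0.
Qed.

End DoubleExtension.

Theorem theorem3p1 (F : closedFieldType) (V : vectType F)
    (brV : V -> V -> V) (alV : V -> V) (BV : V -> V -> F) (D : V -> V)
    (x0 : V) (lam lam0 beta : F) :
  2 \in [pchar F] ->
  is_quadratic_HomLie brV alV BV ->
  hom_multiplicative brV alV ->
  involutive_map alV ->
  is_alpha_derivation brV alV D ->
  D_invariant BV D ->
  (forall y, lam *: D y + brV x0 y = D y) ->
  alV (D x0) = D x0 ->
  (forall y, alV (D (D y)) + D (D (alV y)) = brV (D x0) y) ->
  let br := ext_bracket brV BV D in
  let al := ext_alpha alV BV x0 lam lam0 in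
  let B := ext_form BV beta in
  [/\ is_quadratic_HomLie br al B /\ hom_multiplicative br al,
      bijective al <-> lam != 0 &
      involutive_map al <-> [/\ lam ^+ 2 = 1, alV x0 = lam *: x0 & BV x0 x0 = 0]].
Proof.
move=> pchar2F [[brV_bil alV_lin brV_alt brV_jac] [BV_bil [BV_sym [BV_nondeg [BV_inv BV_alV]]]]].
move=> alV_mult alV_invol [D_lin D_alV D_der] BV_Dinv D_x0 alV_Dx0 D2_alV br al B.
split; first split.
- exact: ext_is_quadratic_HomLie.
- exact: ext_alpha_multiplicative.
- exact: ext_alpha_bijective.
- exact: ext_alpha_involutive.
Qed.
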